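(* Let $\gamma$ be non-decreasing with $\gamma\in L^2(0,1)$, $\int_0^1\gamma=1$ and $\gamma\not\equiv1$. Let $\mu\in\mathbb R$ and $\sigma>0$, and let $c_0=\operatorname{corr}(F^{-1}(U),\gamma(U))<1$. Assume $$(\mu_F-\mu)^2+(\sigma_F-\sigma)^2<\varepsilon\le(\mu_F-\mu)^2+(\sigma_F-\sigma)^2+2\sigma\sigma_F(1-c_0).$$ Put $$K=\tfrac12\big(\mu_F^2+\sigma_F^2+\mu^2+\sigma^2-2\mu\mu_F-\varepsilon\big),\qquad V=\operatorname{var}(\gamma(U)),\qquad C_{\gamma,F}=\operatorname{cov}(F^{-1}(U),\gamma(U)),$$ $$\Delta=\frac{K^2(C_{\gamma,F}^2-V\sigma_F^2)}{K^2-\sigma^2\sigma_F^2}.$$ Then $K\ge0$ and $\Delta\ge0$. Moreover, the unique $\lambda\ge0$ with $$d_W(F^{-1},h_\lambda)^2=\mathbb E\big((F^{-1}(U)-h_\lambda(U))^2\big)=\varepsilon$$ is $$\lambda=\frac{\sqrt\Delta-C_{\gamma,F}}{\sigma_F^2}.$$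
   Context: $U\sim\mathcal U(0,1)$. $F$ is a reference distribution function with finite second moment, mean $\mu_F$, standard deviation $\sigma_F>0$, and quantile function $F^{-1}(u)=\inf\{y:F(y)\ge u\}$. For $\lambda\ge0$, $$h_\lambda(u)=\mu+\sigma\,\frac{\gamma(u)+\lambda F^{-1}(u)-a_\lambda}{b_\lambda},$$ with $a_\lambda=\mathbb E(\gamma(U)+\lambda F^{-1}(U))$ and $b_\lambda=\operatorname{std}(\gamma(U)+\lambda F^{-1}(U))$. $d_W(G_1^{-1},G_2^{-1})=\big(\int_0^1(G_1^{-1}-G_2^{-1})^2\big)^{1/2}$. *)

From HB Require Import structures.
From mathcomp Require Import all_boot all_order all_algebra.
From mathcomp Require Import all_classical all_reals all_analysis.
Set Implicit Arguments. Unset Strict Implicit. Unset Printing Implicit Defensive.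
Import Order.TTheory GRing.Theory Num.Theory.
Import numFieldNormedType.Exports.
Local Open Scope classical_set_scope.
Local Open Scope ring_scope.

Section Defs.
Variable R : realType.

(* the open unit interval, the support of U ~ U(0,1) *)
Definition I01 : set R := `]0%R, 1%R[.

Definition is_distribution_function (F : R -> R) : Prop :=
  [/\ {homo F : x y / x <= y},
      (forall x0 : R, F x @[x --> x0^'+] --> F x0),
      F x @[x --> -oo] --> (0:R) &
      F x @[x --> +oo] --> (1:R)].

Definition quantile (F : R -> R) (u : R) : R := inf [set y | u <= F y].

Definition L2_01 (f : R -> R) : Prop :=
  measurable_fun I01 f /\
  (\int[@lebesgue_measure R]_(x in I01) ((f x) ^+ 2)%:E < +oo)%E.

Definition EU (f : R -> R) : R := Rintegral (@lebesgue_measure R) I01 f.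
Definition varU (f : R -> R) : R := EU (fun u => (f u - EU f) ^+ 2).
Definition stdU (f : R -> R) : R := Num.sqrt (varU f).
Definition covU (f g : R -> R) : R :=
  EU (fun u => (f u - EU f) * (g u - EU g)).
Definition corrU (f g : R -> R) : R := covU f g / (stdU f * stdU g).

Definition h_lam (gamma Finv : R -> R) (mu sigma lam : R) (u : R) : R :=
  let a := EU (fun v => gamma v + lam * Finv v) in
  let b := stdU (fun v => gamma v + lam * Finv v) in
  mu + sigma * ((gamma u + lam * Finv u - a) / b).

(* Wasserstein-2 distance between quantile functions *)
Definition dW (G1 G2 : R -> R) : R :=
  Num.sqrt (EU (fun u => (G1 u - G2 u) ^+ 2)).

End Defs.

From HB Require Import structures.
From mathcomp Require Import all_boot all_order all_algebra.
From mathcomp Require Import all_classical all_reals all_analysis.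
From mathcomp Require Import ring lra measurable_realfun.
Set Implicit Arguments. Unset Strict Implicit. Unset Printing Implicit Defensive.
Import Order.TTheory GRing.Theory Num.Theory.
Import numFieldNormedType.Exports.
Local Open Scope classical_set_scope.
Local Open Scope ring_scope.

(** Writing X = F^{-1}(U) and Y_lam = gamma(U) + lam X, the function h_lam is Y_lam
   rescaled to mean mu and standard deviation sigma, so
   d_W(F^{-1}, h_lam)^2 = (mu_F - mu)^2 + sigma_F^2 + sigma^2
                          - 2 sigma cov(X, Y_lam) / sd(Y_lam).
   Hence d_W^2 = eps iff sigma (C + lam sigma_F^2) = K sd(Y_lam); squaring, with
   var(Y_lam) sigma_F^2 = (C + lam sigma_F^2)^2 - C^2 + V sigma_F^2, this says
   (C + lam sigma_F^2)^2 = Delta.  The sign conditions making this an equivalence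
   come from C >= 0 (X and gamma(U) are both nondecreasing in U, hence positively
   associated) and from the bounds on eps, which give sigma sigma_F c_0 <= K
   < sigma sigma_F. *)

Section Integrability.
Variable R : realType.
Local Notation mu := (@lebesgue_measure R).
Implicit Types (f g : R -> R) (a b : R).

Lemma measurable_I01 : measurable (@I01 R).
Proof. exact: measurable_itv. Qed.

Lemma lebesgue_measure_I01 : mu (@I01 R) = 1%E.
Proof. by rewrite /I01 lebesgue_measure_itv /= lte_fin ltr01 oppr0 adde0. Qed.

Definition Int01 f := mu.-integrable (@I01 R) (EFin \o f).

Lemma Int01_cst a : Int01 (fun _ => a).
Proof.
apply/integrableP; split; first exact/measurable_EFinP/measurable_cst.
rewrite integral_cst; last exact: measurable_I01.
set m := (X in (_ * X)%E); have -> : m = 1%E by exact: lebesgue_measure_I01.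
by rewrite mule1 ltry.
Qed.

Lemma Int01D f g : Int01 f -> Int01 g -> Int01 (fun x => f x + g x).
Proof. by move=> Hf Hg; apply: integrableD Hf Hg; exact: measurable_I01. Qed.

Lemma Int01Z a f : Int01 f -> Int01 (fun x => a * f x).
Proof. by move=> Hf; apply: integrableZl Hf; exact: measurable_I01. Qed.

Lemma measurable_Int01 f : Int01 f -> measurable_fun (@I01 R) f.
Proof. by case/integrableP => /measurable_EFinP. Qed.

Lemma L2_01P f : L2_01 f <-> measurable_fun (@I01 R) f /\ Int01 (fun x => f x ^+ 2).
Proof.
have abs_sqr x : (`|f x ^+ 2|)%:E = (f x ^+ 2)%:E by rewrite ger0_norm ?sqr_ge0.
split=> [[mf fi]|[mf /integrableP[_ fi]]]; split => //.
  apply/integrableP; split; first exact/measurable_EFinP/measurable_funX.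
  by under eq_integral do rewrite /= abs_sqr.
by under eq_integral do rewrite -abs_sqr.
Qed.

Lemma Int01_mul f g : L2_01 f -> L2_01 g -> Int01 (fun x => f x * g x).
Proof.
move=> /L2_01P[mf f2] /L2_01P[mg g2].
apply: le_integrable (Int01D f2 g2); first exact: measurable_I01.
  exact/measurable_EFinP/measurable_funM.
move=> x _ /=; rewrite lee_fin normrM [X in _ <= X]ger0_norm ?addr_ge0 ?sqr_ge0 //.
rewrite -(real_normK (num_real (f x))) -(real_normK (num_real (g x))).
have := normr_ge0 (f x); have := normr_ge0 (g x); nra.
Qed.

Lemma L2_01_Int01 f : L2_01 f -> Int01 f.
Proof.
move=> Hf; rewrite (_ : f = fun x => f x * 1); last by apply: funext => x; rewrite mulr1.
apply: Int01_mul => //; apply/L2_01P; split; first exact: measurable_cst.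
exact: Int01_cst.
Qed.

Lemma L2_01_cst a : L2_01 (fun _ => a).
Proof. by apply/L2_01P; split; [exact: measurable_cst | exact: Int01_cst]. Qed.

Lemma L2_01D f g : L2_01 f -> L2_01 g -> L2_01 (fun x => f x + g x).
Proof.
move=> Hf Hg; apply/L2_01P; split.
  by apply: measurable_funD; [case: Hf | case: Hg].
rewrite (_ : (fun x => _) = fun x => f x * f x + (2 * (f x * g x) + g x * g x)).
  by apply: Int01D; [|apply: Int01D; [apply: Int01Z|]]; exact: Int01_mul.
by apply: funext => x; ring.
Qed.

Lemma L2_01Z a f : L2_01 f -> L2_01 (fun x => a * f x).
Proof.
move=> Hf; apply/L2_01P; split; first by apply: measurable_funM => //; case: Hf.
rewrite (_ : (fun x => _) = fun x => a ^+ 2 * (f x * f x)).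
  by apply: Int01Z; exact: Int01_mul.
by apply: funext => x; ring.
Qed.

Lemma L2_01_center f : L2_01 f -> L2_01 (fun x => f x - EU f).
Proof. by move=> Hf; apply: L2_01D Hf (L2_01_cst _). Qed.

End Integrability.

Section Expectation.
Variable R : realType.
Local Notation mu := (@lebesgue_measure R).
Implicit Types (f g : R -> R) (a b : R).

Lemma EU_cst a : EU (fun _ : R => a) = a.
Proof.
rewrite /EU Rintegral_cst; last exact: measurable_I01.
set m := (X in fine X); have -> : m = 1%E by exact: lebesgue_measure_I01.
by rewrite mulr1.
Qed.

Lemma EUD f g : Int01 f -> Int01 g -> EU (fun x => f x + g x) = EU f + EU g.
Proof. by move=> Hf Hg; apply: RintegralD Hf Hg; exact: measurable_I01. Qed.

Lemma EUZ a f : Int01 f -> EU (fun x => a * f x) = a * EU f.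
Proof. by move=> Hf; apply: RintegralZl Hf; exact: measurable_I01. Qed.

Lemma EU_ge0 f : (forall x, I01 x -> 0 <= f x) -> 0 <= EU f.
Proof. exact: (Rintegral_ge0 mu). Qed.

Lemma varU_ge0 f : 0 <= varU f.
Proof. by apply: EU_ge0 => x _; exact: sqr_ge0. Qed.

Lemma sqr_stdU f : stdU f ^+ 2 = varU f.
Proof. by rewrite sqr_sqrtr ?varU_ge0. Qed.

Lemma eq_EU_ae f g : Int01 f -> Int01 g ->
  {ae mu, forall x, I01 x -> f x = g x} -> EU f = EU g.
Proof.
move=> Hf Hg fg; rewrite /EU /Rintegral; congr fine.
apply: ae_eq_integral; first exact: measurable_I01.
- by apply/measurable_EFinP; exact: measurable_Int01.
- by apply/measurable_EFinP; exact: measurable_Int01.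
- have FF := ae_filter_ringOfSetsType mu.
  by apply: filterS fg => x fgx /fgx /= ->.
Qed.

Lemma EU_eq0_ae f : Int01 f -> (forall x, I01 x -> 0 <= f x) -> EU f = 0 ->
  {ae mu, forall x, I01 x -> f x = 0}.
Proof.
move=> Hf f0 Ef0.
have int0 : (\int[mu]_(x in @I01 R) (f x)%:E = 0)%E.
  rewrite -(@fineK _ (\int[mu]_(x in _) _)%E) ?[fine _]Ef0 //.
  by apply: (integrable_fin_num _ Hf); exact: measurable_I01.
have : ae_eq mu (@I01 R) (EFin \o f) (cst 0%E).
  apply/ae_eq_integral_abs; first exact: measurable_I01.
    by apply/measurable_EFinP; exact: measurable_Int01.
  rewrite -int0; apply: eq_integral => x.
  by rewrite inE => Ix /=; rewrite ger0_norm ?f0.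
have FF := ae_filter_ringOfSetsType mu.
by apply: filterS => x fx /fx [].
Qed.

End Expectation.

Local Ltac int01 := repeat first [ assumption | apply: Int01D | apply: Int01Z
  | apply: Int01_cst | apply: Int01_mul | apply: L2_01_Int01 ].

Section Covariance.
Variable R : realType.
Implicit Types (f g h : R -> R) (a : R).

Lemma varU_covU f : varU f = covU f f.
Proof. by []. Qed.

Lemma covUC f g : covU f g = covU g f.
Proof. by rewrite /covU; congr EU; apply: funext => x; rewrite mulrC. Qed.

Lemma covUE f g : L2_01 f -> L2_01 g ->
  covU f g = EU (fun x => f x * g x) - EU f * EU g.
Proof.
move=> Hf Hg; have [If Ig] := (L2_01_Int01 Hf, L2_01_Int01 Hg).
rewrite /covU (_ : (fun x => _) =
  fun x => f x * g x + (- EU g * f x + (- EU f * g x + EU f * EU g))); last first.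
  by apply: funext => x; ring.
by rewrite !EUD ?EUZ ?EU_cst; [ring | int01..].
Qed.

Lemma covU_cstr f a : covU f (fun _ => a) = 0.
Proof.
rewrite /covU EU_cst (_ : (fun x => _) = fun _ => 0) ?EU_cst //.
by apply: funext => x; rewrite subrr mulr0.
Qed.

Lemma covUDr f g h : L2_01 f -> L2_01 g -> L2_01 h ->
  covU f (fun x => g x + h x) = covU f g + covU f h.
Proof.
move=> Hf Hg Hh; have Hgh := L2_01D Hg Hh.
rewrite !covUE // EUD ?L2_01_Int01 //.
rewrite (_ : (fun x => _) = fun x => f x * g x + f x * h x).
  by rewrite EUD ?Int01_mul //; ring.
by apply: funext => x; ring.
Qed.

Lemma covUZr f a g : L2_01 f -> L2_01 g ->
  covU f (fun x => a * g x) = a * covU f g.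
Proof.
move=> Hf Hg; have Hag := L2_01Z a Hg.
rewrite !covUE // EUZ ?L2_01_Int01 //.
rewrite (_ : (fun x => _) = fun x => a * (f x * g x)).
  by rewrite EUZ ?Int01_mul //; ring.
by apply: funext => x; ring.
Qed.

Lemma varU_add_scale g a f : L2_01 f -> L2_01 g ->
  varU (fun x => g x + a * f x) = varU g + 2 * a * covU f g + a ^+ 2 * varU f.
Proof.
move=> Hf Hg; have Haf := L2_01Z a Hf; have Hgaf := L2_01D Hg Haf.
rewrite (varU_covU g) (varU_covU f) varU_covU (covUDr Hgaf Hg Haf) (covUZr a Hgaf Hf).
rewrite (covUC _ g) (covUC _ f) (covUDr Hg Hg Haf) (covUDr Hf Hg Haf).
rewrite (covUZr a Hg Hf) (covUZr a Hf Hf) (covUC g f).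
(* [ring] would compare the covariances by conversion, unfolding the integrals. *)
by move: (covU g g) (covU f g) (covU f f) => vg c vf; ring.
Qed.

Lemma EU_sqr_sub f g : L2_01 f -> L2_01 g ->
  EU (fun x => (f x - g x) ^+ 2) =
  (EU f - EU g) ^+ 2 + varU f + varU g - 2 * covU f g.
Proof.
move=> Hf Hg; rewrite !varU_covU !covUE //.
rewrite (_ : (fun x => _) =
  fun x => f x * f x + (-2 * (f x * g x) + g x * g x)); last first.
  by apply: funext => x; ring.
by rewrite !EUD ?EUZ; [ring | int01..].
Qed.

End Covariance.

Section Standardize.
Variables (R : realType) (m s : R).
Implicit Types (f g : R -> R).

Definition standardize g u := m + s * ((g u - EU g) / stdU g).

Lemma standardize_affine g :
  standardize g = fun u => (m - s * EU g / stdU g) + s / stdU g * g u.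
Proof. by apply: funext => u; rewrite /standardize; ring. Qed.

Lemma L2_01_standardize g : L2_01 g -> L2_01 (standardize g).
Proof.
by move=> Hg; rewrite standardize_affine; apply: L2_01D; [exact: L2_01_cst | exact: L2_01Z].
Qed.

Lemma EU_standardize g : L2_01 g -> EU (standardize g) = m.
Proof.
move=> Hg; rewrite standardize_affine EUD ?EU_cst ?EUZ; first ring.
all: by [exact: L2_01_Int01 | exact: Int01_cst | apply/Int01Z/L2_01_Int01].
Qed.

Lemma covU_standardizer f g : L2_01 f -> L2_01 g ->
  covU f (standardize g) = s / stdU g * covU f g.
Proof.
move=> Hf Hg; rewrite standardize_affine covUDr ?covU_cstr ?covUZr ?add0r //.
  exact: L2_01_cst.
exact: L2_01Z.
Qed.

Lemma varU_standardize g : L2_01 g -> 0 < varU g -> varU (standardize g) = s ^+ 2.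
Proof.
move=> Hg vg0; have Hz := L2_01_standardize Hg.
rewrite varU_covU covU_standardizer // covUC covU_standardizer // -varU_covU.
by rewrite mulrA -expr2 expr_div_n sqr_stdU divfK // gt_eqF.
Qed.

End Standardize.

Lemma dW_sqr (R : realType) (f g : R -> R) :
  dW f g ^+ 2 = EU (fun u => (f u - g u) ^+ 2).
Proof. by rewrite /dW sqr_sqrtr // EU_ge0 // => x _; exact: sqr_ge0. Qed.

Lemma h_lam_standardize (R : realType) (gamma Finv : R -> R) (mu sigma lam : R) :
  h_lam gamma Finv mu sigma lam = standardize mu sigma (fun v => gamma v + lam * Finv v).
Proof. by []. Qed.

Lemma dW_h_lam (R : realType) (X G : R -> R) (mu sigma lam : R) :
  L2_01 X -> L2_01 G -> 0 < varU (fun v => G v + lam * X v) ->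
  dW X (h_lam G X mu sigma lam) ^+ 2 = (EU X - mu) ^+ 2 + varU X + sigma ^+ 2
    - 2 * sigma * (covU X G + lam * varU X) / stdU (fun v => G v + lam * X v).
Proof.
move=> HX HG vY0; have HY := L2_01D HG (L2_01Z lam HX).
have Hh := L2_01_standardize mu sigma HY.
rewrite h_lam_standardize dW_sqr EU_sqr_sub //.
rewrite EU_standardize // varU_standardize // covU_standardizer //.
rewrite (covUDr HX HG (L2_01Z lam HX)) (covUZr lam HX HX) -varU_covU.
by move: (covU X G) (varU X) (stdU _) => c v b; ring.
Qed.

Section Moments.
Variable R : realType.
Local Notation mu := (@lebesgue_measure R).
Implicit Types (f g : R -> R) (c k : R).

Definition nondecreasing01 f := forall x y, I01 x -> I01 y -> x <= y -> f x <= f y.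

Lemma covU_shiftl f g c : L2_01 f -> L2_01 g ->
  covU f g = EU (fun x => (f x - c) * (g x - EU g)).
Proof.
move=> Hf Hg; have [Hfc Hgc] := (L2_01_center Hf, L2_01_center Hg).
rewrite (_ : (fun x => _) = fun x =>
  (f x - EU f) * (g x - EU g) + (EU f - c) * (g x - EU g)); last first.
  by apply: funext => x; ring.
rewrite EUD ?EUZ ?EUD ?EU_cst ?subrr ?mulr0 ?addr0 //.
- exact: L2_01_Int01.
- exact: Int01_cst.
- exact: L2_01_Int01.
- exact: Int01_mul.
- exact/Int01Z/L2_01_Int01.
Qed.

Lemma covU_ae_cstr f g : L2_01 f -> L2_01 g ->
  {ae mu, forall x, I01 x -> g x = EU g} -> covU f g = 0.
Proof.
move=> Hf Hg gE; rewrite /covU -[RHS](EU_cst 0); apply: eq_EU_ae.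
- by apply: Int01_mul; exact: L2_01_center.
- exact: Int01_cst.
- have FF := ae_filter_ringOfSetsType mu.
  by apply: filterS gE => x gx /gx ->; rewrite subrr mulr0.
Qed.

Lemma ae_eq_EU_signed g k : L2_01 g -> k != 0 ->
  (forall x, I01 x -> 0 <= k * (g x - EU g)) ->
  {ae mu, forall x, I01 x -> g x = EU g}.
Proof.
move=> Hg k0 kg; have Ikg : Int01 (fun x => k * (g x - EU g)).
  exact/Int01Z/L2_01_Int01/L2_01_center.
have EU0 : EU (fun x => k * (g x - EU g)) = 0.
  rewrite EUZ ?EUD ?EU_cst ?subrr ?mulr0 //.
  - exact: L2_01_Int01.
  - exact: Int01_cst.
  - exact/L2_01_Int01/L2_01_center.
have FF := ae_filter_ringOfSetsType mu.
apply: filterS (EU_eq0_ae Ikg kg EU0) => x kgx /kgx /eqP.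
by rewrite mulf_eq0 (negbTE k0) subr_eq0 => /eqP.
Qed.

(* Chebyshev's association inequality: with c the supremum of f on {g < E g},
   (f - c) (g - E g) >= 0 on (0,1); if no such c exists, g stays on one side of
   its mean and is therefore a.e. constant. *)
Lemma covU_ge0_nondecreasing f g : L2_01 f -> L2_01 g ->
  nondecreasing01 f -> nondecreasing01 g -> 0 <= covU f g.
Proof.
move=> Hf Hg mf mg; set m := EU g.
have [[a [Ia ga]] | g_ge] := pselect (exists a, I01 a /\ g a < m); last first.
  rewrite covU_ae_cstr //; apply: (@ae_eq_EU_signed _ 1) => // x Ix.
  by rewrite mul1r subr_ge0 leNgt; apply/negP => gx; apply: g_ge; exists x.
have [[b [Ib gb]] | g_le] := pselect (exists b, I01 b /\ m < g b); last first.
  rewrite covU_ae_cstr //; apply: (@ae_eq_EU_signed _ (-1)) => //.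
  move=> x Ix; rewrite mulN1r oppr_ge0 subr_le0 leNgt.
  by apply/negP => gx; apply: g_le; exists x.
pose S := f @` [set u | I01 u /\ g u < m].
have ubS v : I01 v -> m < g v -> ubound S (f v).
  move=> Iv gv _ [u [Iu gu] <-]; apply: mf => //.
  by rewrite leNgt; apply/negP => vu; have := mg _ _ Iv Iu (ltW vu); lra.
have S0 : S !=set0 by exists (f a), a.
have ubdS : has_ubound S by exists (f b); exact: ubS.
rewrite (covU_shiftl (sup S)) //; apply: EU_ge0 => u Iu.
case: (ltgtP (g u) m) => gum.
- have fuS : f u <= sup S by apply: ub_le_sup => //; exists u.
  by apply: mulr_le0; rewrite subr_le0 // ltW.
- have Sfu : sup S <= f u by apply: ge_sup => //; exact: ubS.
  by apply: mulr_ge0; rewrite subr_ge0 // ltW.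
- by rewrite gum subrr mulr0.
Qed.

Lemma varU_gt0 g : L2_01 g -> ~ {ae mu, forall x, I01 x -> g x = EU g} -> 0 < varU g.
Proof.
move=> Hg nconst; rewrite lt_def (EU_ge0 (fun x _ => sqr_ge0 _)) andbT.
apply/eqP => v0; apply: nconst.
have Ig2 : Int01 (fun x => (g x - EU g) ^+ 2) by apply: Int01_mul; exact: L2_01_center.
have FF := ae_filter_ringOfSetsType mu.
apply: filterS (EU_eq0_ae Ig2 (fun x _ => sqr_ge0 _) v0) => x gx /gx /eqP.
by rewrite sqrf_eq0 subr_eq0 => /eqP.
Qed.

End Moments.

Lemma quantile_nondecreasing (R : realType) (F : R -> R) :
  is_distribution_function F -> nondecreasing01 (quantile F).
Proof.
case=> Fmono _ F0 F1 u v; rewrite /I01 /= !in_itv /= => /andP[u0 u1] /andP[v0 v1] uv.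
have [M [_ FM]] := cvgr_lt _ F0 _ u0.
have [N [_ FN]] := cvgr_gt _ F1 _ v1.
have lbM : lbound [set y | u <= F y] M.
  by move=> y /= uy; rewrite leNgt; apply/negP => /FM; rewrite ltNge uy.
apply: lb_le_inf; first by exists (N + 1) => /=; apply/ltW/FN; rewrite ltrDl.
move=> y /= vy; apply: ge_inf; first by exists M.
by rewrite /= (le_trans uv vy).
Qed.

Lemma lincomb_var_gt0 (R : realType) (V C a t : R) : 0 < V -> 0 <= C -> 0 <= t ->
  0 < V + 2 * t * C + t ^+ 2 * a ^+ 2.
Proof.
move=> V_gt0 C_ge0 t_ge0.
have : 0 <= 2 * t * C by rewrite !mulr_ge0.
have : 0 <= t ^+ 2 * a ^+ 2 by rewrite mulr_ge0 ?sqr_ge0.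
by move: V_gt0; lra.
Qed.

Section Calibration.
Variables (R : realType) (mF m s sF V C eps : R).
Hypotheses (s_gt0 : 0 < s) (sF_gt0 : 0 < sF) (V_gt0 : 0 < V) (C_ge0 : 0 <= C).
Let c0 := C / (sF * Num.sqrt V).
Hypotheses (eps_gt : (mF - m) ^+ 2 + (sF - s) ^+ 2 < eps)
  (eps_le : eps <= (mF - m) ^+ 2 + (sF - s) ^+ 2 + 2 * s * sF * (1 - c0)).

Let K := (mF ^+ 2 + sF ^+ 2 + m ^+ 2 + s ^+ 2 - 2 * m * mF - eps) / 2.
Let Delta := K ^+ 2 * (C ^+ 2 - V * sF ^+ 2) / (K ^+ 2 - s ^+ 2 * sF ^+ 2).
Let lam0 := (Num.sqrt Delta - C) / sF ^+ 2.

Let twoK : 2 * K = (mF - m) ^+ 2 + (sF - s) ^+ 2 + 2 * s * sF - eps.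
Proof. by rewrite /K; field. Qed.

Let w_gt0 : 0 < Num.sqrt V. Proof. by rewrite sqrtr_gt0. Qed.

Let K_ge : s * C <= K * Num.sqrt V.
Proof.
have -> : s * C = s * sF * c0 * Num.sqrt V.
  by rewrite /c0; field; rewrite !gt_eqF.
by rewrite ler_pM2r //; move: eps_le twoK; clearbody K c0; lra.
Qed.

Let K_ge0 : 0 <= K.
Proof.
by rewrite -(pmulr_rge0 _ w_gt0) mulrC (le_trans _ K_ge) // mulr_ge0 // ltW.
Qed.

Let K_lt : K < s * sF.
Proof. by move: eps_gt twoK; clearbody K; lra. Qed.

Let den_gt0 : 0 < s ^+ 2 * sF ^+ 2 - K ^+ 2.
Proof.
rewrite subr_gt0 -exprMn ltr_pXn2r // nnegrE ?K_ge0 //.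
by rewrite mulr_ge0 // ltW.
Qed.

Let DeltaE : Delta = K ^+ 2 * (V * sF ^+ 2 - C ^+ 2) / (s ^+ 2 * sF ^+ 2 - K ^+ 2).
Proof.
by rewrite /Delta -[K ^+ 2 - _]opprB -[C ^+ 2 - _]opprB mulrN invrN mulrNN.
Qed.

Let sqrC_le_Delta : C ^+ 2 <= Delta.
Proof.
rewrite DeltaE ler_pdivlMr //.
have sC_nneg : s * C \in Num.nneg by rewrite nnegrE mulr_ge0 // ltW.
have Kw_nneg : K * Num.sqrt V \in Num.nneg.
  by rewrite nnegrE mulr_ge0 ?K_ge0 ?sqrtr_ge0.
have := lerXn2r 2 sC_nneg Kw_nneg K_ge.
rewrite /= !exprMn sqr_sqrtr ?(ltW V_gt0) // => sCK.
have : 0 < sF ^+ 2 by rewrite exprn_gt0.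
nra.
Qed.

Let Delta_ge0 : 0 <= Delta.
Proof. exact: le_trans (sqr_ge0 C) sqrC_le_Delta. Qed.

Let lam0_ge0 : 0 <= lam0.
Proof.
rewrite divr_ge0 ?sqr_ge0 // subr_ge0 -(ger0_norm C_ge0) -sqrtr_sqr.
by rewrite ler_sqrt ?Delta_ge0.
Qed.

Lemma calibration_eq_iff lam : 0 <= lam ->
  (mF - m) ^+ 2 + sF ^+ 2 + s ^+ 2 - 2 * s * (C + lam * sF ^+ 2)
     / Num.sqrt (V + 2 * lam * C + lam ^+ 2 * sF ^+ 2) = eps <-> lam = lam0.
Proof.
move=> lam_ge0; set u := C + lam * sF ^+ 2; set b := V + _ + _.
have sF2_neq0 : sF ^+ 2 != 0 by rewrite expf_neq0 // gt_eqF.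
have u_ge0 : 0 <= u by rewrite addr_ge0 // mulr_ge0 ?sqr_ge0.
have b_gt0 : 0 < b by exact: lincomb_var_gt0.
have sqrt_b_gt0 : 0 < Num.sqrt b by rewrite sqrtr_gt0.
have dist_eq : ((mF - m) ^+ 2 + sF ^+ 2 + s ^+ 2 - 2 * s * u / Num.sqrt b == eps)
    = (s * u == K * Num.sqrt b).
  rewrite -subr_eq0 (_ : _ - eps = 2 * ((K * Num.sqrt b - s * u) / Num.sqrt b)).
    rewrite mulf_eq0 pnatr_eq0 /= mulf_eq0 invr_eq0 (gt_eqF sqrt_b_gt0) orbF.
    by rewrite subr_eq0 eq_sym.
  by rewrite /K; field; rewrite gt_eqF.
have sqr_eq : (s * u == K * Num.sqrt b) = (u ^+ 2 == Delta).
  have su_ge0 : 0 <= s * u by rewrite mulr_ge0 // ltW.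
  have Kb_ge0 : 0 <= K * Num.sqrt b by rewrite mulr_ge0 ?K_ge0 ?sqrtr_ge0.
  rewrite -(eqrXn2 (isT : (0 < 2)%N) su_ge0 Kb_ge0) 2!exprMn sqr_sqrtr ?ltW //.
  rewrite -subr_eq0 -(inj_eq (mulIf sF2_neq0)) mul0r.
  rewrite (_ : (s ^+ 2 * u ^+ 2 - K ^+ 2 * b) * sF ^+ 2
             = (u ^+ 2 - Delta) * (s ^+ 2 * sF ^+ 2 - K ^+ 2)).
    by rewrite mulf_eq0 (gt_eqF den_gt0) orbF subr_eq0.
  by rewrite DeltaE /u /b; field; rewrite exprMn gt_eqF.
have root_eq : (u ^+ 2 == Delta) = (lam == lam0).
  rewrite -{1}(sqr_sqrtr Delta_ge0) eqrXn2 ?sqrtr_ge0 //.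
  have lamE : lam = (u - C) / sF ^+ 2 by rewrite /u; field; rewrite gt_eqF.
  rewrite lamE /lam0 eqr_div // (inj_eq (mulIf sF2_neq0)).
  by rewrite (inj_eq (addIr _)).
apply: (iff_trans (rwP eqP)); rewrite dist_eq sqr_eq root_eq.
exact: iff_sym (rwP eqP).
Qed.

Lemma calibration :
  [/\ 0 <= K, 0 <= Delta, 0 <= lam0 & forall lam, 0 <= lam ->
    (mF - m) ^+ 2 + sF ^+ 2 + s ^+ 2 - 2 * s * (C + lam * sF ^+ 2)
       / Num.sqrt (V + 2 * lam * C + lam ^+ 2 * sF ^+ 2) = eps <-> lam = lam0].
Proof.
by split; last exact: calibration_eq_iff.
Qed.

End Calibration.

Unset Implicit Arguments.

Theorem lemmaB3 (R : realType) (F gamma : R -> R) (mu sigma eps : R) :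
  is_distribution_function F ->
  L2_01 (quantile F) ->
  0 < stdU (quantile F) ->
  (forall x y, I01 x -> I01 y -> x <= y -> gamma x <= gamma y) ->
  L2_01 gamma ->
  EU gamma = 1 ->
  ~ {ae @lebesgue_measure R, forall x, I01 x -> gamma x = 1} ->
  0 < sigma ->
  corrU (quantile F) gamma < 1 ->
  let muF := EU (quantile F) in
  let sigF := stdU (quantile F) in
  let c0 := corrU (quantile F) gamma in
  (muF - mu) ^+ 2 + (sigF - sigma) ^+ 2 < eps ->
  eps <= (muF - mu) ^+ 2 + (sigF - sigma) ^+ 2 + 2 * sigma * sigF * (1 - c0) ->
  let K := (muF ^+ 2 + sigF ^+ 2 + mu ^+ 2 + sigma ^+ 2 - 2 * mu * muF - eps) / 2 in
  let V := varU gamma in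
  let C := covU (quantile F) gamma in
  let Delta := K ^+ 2 * (C ^+ 2 - V * sigF ^+ 2) / (K ^+ 2 - sigma ^+ 2 * sigF ^+ 2) in
  let lam0 := (Num.sqrt Delta - C) / sigF ^+ 2 in
  [/\ 0 <= K, 0 <= Delta,
      0 <= lam0 /\ dW (quantile F) (h_lam gamma (quantile F) mu sigma lam0) ^+ 2 = eps &
      forall lam, 0 <= lam ->
        dW (quantile F) (h_lam gamma (quantile F) mu sigma lam) ^+ 2 = eps ->
        lam = lam0].
Proof.
move=> HF HX sigF_gt0 gamma_mono Hgamma Egamma gamma_nconst sigma_gt0 _
  muF sigF c0 eps_gt eps_le K V C Delta lam0.
have C_ge0 : 0 <= C.
  exact: covU_ge0_nondecreasing HX Hgamma (quantile_nondecreasing HF) gamma_mono.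
have V_gt0 : 0 < V by apply: varU_gt0; rewrite ?Egamma.
have [K_ge0 Delta_ge0 lam0_ge0 eq_iff] :=
  calibration sigma_gt0 sigF_gt0 V_gt0 C_ge0 eps_gt eps_le.
have dW_eq_iff lam : 0 <= lam ->
    dW (quantile F) (h_lam gamma (quantile F) mu sigma lam) ^+ 2 = eps <-> lam = lam0.
  move=> lam_ge0; have varX : varU (quantile F) = sigF ^+ 2 by rewrite sqr_stdU.
  have varY := varU_add_scale lam HX Hgamma; rewrite varX in varY.
  rewrite dW_h_lam ?varY ?lincomb_var_gt0 // /stdU varY varX.
  exact: eq_iff.
split=> //; first by split=> //; apply/dW_eq_iff.
by move=> lam lam_ge0 /(dW_eq_iff _ lam_ge0).
Qed.
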